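(* Let $M$ be a sharp toric monoid, $\mathfrak p\subset M$ a prime ideal of height $1$, and $F=M\setminus\mathfrak p$ the corresponding facet. The following are equivalent: (a) $F$ splits off (there is a face $K$ with $F\oplus K\to M$ an isomorphism); (b) the ideal $(F^+)=F^++M$ is prime and $\operatorname{ht}((F^+))\ge\operatorname{rk}(M)-1$; (c) $(F^+)$ is prime and there is at most one edge of $M$ not contained in $F$; (d) $(F^+)$ equals the union of all prime ideals of $M$ of height $1$ different from $\mathfrak p$; (e) $\mathfrak p$ is principal, i.e. $\mathfrak p=e+M$ for some $e\in M$. Moreover, if these conditions hold then $M=F\oplus\mathbb N e$, where $e$ is a generator of $\mathfrak p$, and $\mathbb N e$ is the only edge of $M$ not contained in $F$.
   Context: Monoids are commutative. For a monoid $M$: $M^\times$ its units, $M^{gp}$ its Grothendieck group, $\operatorname{rk}(M)=\dim_{\mathbb Q}(M^{gp}\otimes\mathbb Q)$; $M$ is sharp if $M^\times=\{0\}$. A toric monoid is a fine saturated monoid with torsion-free Grothendieck group. For a face $F$, $F^+=F\setminus F^\times$. An ideal $I\subseteq M$ satisfies $I+M\subseteq I$; it is prime if $M\setminus I$ is a submonoid (hence a face). For a prime $\mathfrak p$ of a toric monoid, $\operatorname{ht}(\mathfrak p)=\operatorname{rk}(M)-\operatorname{rk}(M\setminus\mathfrak p)$; height-one primes correspond to facets. An edge is a face of rank $1$. *)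

From HB Require Import structures.
From mathcomp Require Import all_boot all_order all_algebra.
From Stdlib Require Import ClassicalEpsilon.
Set Implicit Arguments. Unset Strict Implicit. Unset Printing Implicit Defensive.
Import GRing.Theory.
Local Open Scope ring_scope.

Section Monoids.
Variable M : nmodType.

Definition integral_monoid : Prop := forall x y z : M, x + y = x + z -> y = z.

Definition fin_gen : Prop :=
  exists (n : nat) (g : 'I_n -> M),
    forall x : M, exists a : 'I_n -> nat, x = \sum_(i < n) (g i *+ a i).

Definition fine_monoid : Prop := integral_monoid /\ fin_gen.

(* saturated: if n(a - b) lies in M (i.e. n a = n b + c with c in M) for some
   n >= 1, then a - b lies in M (i.e. a = b + d with d in M). *)
Definition saturated_monoid : Prop :=
  forall (a b c : M) (n : nat), (0 < n)%N -> a *+ n = b *+ n + c ->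
    exists d : M, a = b + d.

(* M^gp torsion free: n (a - b) = 0 in M^gp with n >= 1 implies a - b = 0. *)
Definition gp_torsion_free : Prop :=
  forall (a b : M) (n : nat), (0 < n)%N -> a *+ n = b *+ n -> a = b.

Definition toric_monoid : Prop :=
  [/\ fine_monoid, saturated_monoid & gp_torsion_free].

Definition is_unit (x : M) : Prop := exists y : M, x + y = 0.

Definition sharp_monoid : Prop := forall x : M, is_unit x -> x = 0.

Definition submonoid (S : M -> Prop) : Prop :=
  S 0 /\ forall x y, S x -> S y -> S (x + y).

Definition face (F : M -> Prop) : Prop :=
  submonoid F /\ forall x y : M, F (x + y) -> F x /\ F y.

Definition ideal (I : M -> Prop) : Prop := forall x y : M, I x -> I (x + y).

Definition prime_ideal (I : M -> Prop) : Prop :=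
  ideal I /\ submonoid (fun x => ~ I x).

Definition face_plus (F : M -> Prop) (x : M) : Prop :=
  F x /\ ~ (exists y : M, F y /\ x + y = 0).

Definition gen_ideal (S : M -> Prop) (x : M) : Prop :=
  exists s m : M, S s /\ x = s + m.

(* Linear independence of f_0..f_{k-1} in M^gp (x) Q: every (torsion) integral
   relation, written with nat coefficients on both sides, is trivial. *)
Definition gp_Q_independent (k : nat) (f : 'I_k -> M) : Prop :=
  forall (a b : 'I_k -> nat) (n : nat), (0 < n)%N ->
    (\sum_(i < k) (f i *+ a i)) *+ n = (\sum_(i < k) (f i *+ b i)) *+ n ->
    forall i, a i = b i.

(* r is the rank of the submonoid S, i.e. dim_Q (S^gp (x) Q), computed inside
   M^gp (x) Q: the maximal size of a Q-independent family of elements of S. *)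
Definition is_rank (S : M -> Prop) (r : nat) : Prop :=
  (exists f : 'I_r -> M, (forall i, S (f i)) /\ gp_Q_independent f) /\
  (forall (k : nat) (f : 'I_k -> M),
      (forall i, S (f i)) -> gp_Q_independent f -> (k <= r)%N).

Definition rank (S : M -> Prop) : nat := epsilon (inhabits 0%N) (is_rank S).

Definition rk : nat := rank (fun _ => True).

Definition height (P : M -> Prop) : nat := (rk - rank (fun x => ~ P x))%N.

Definition edge (E : M -> Prop) : Prop := face E /\ rank E = 1%N.

Definition subset_of (A B : M -> Prop) : Prop := forall x, A x -> B x.
Definition same_set (A B : M -> Prop) : Prop := forall x, A x <-> B x.

(* F splits off: there is a face K with F (+) K -> M, (f,k) |-> f + k, an
   isomorphism (it is always a monoid morphism; we require bijectivity). *)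
Definition splits_off (F : M -> Prop) : Prop :=
  exists K : M -> Prop, face K /\
    (forall x : M, exists f k : M, [/\ F f, K k & x = f + k]) /\
    (forall f k f' k' : M, F f -> K k -> F f' -> K k' ->
        f + k = f' + k' -> f = f' /\ k = k').

Definition nat_mults (e : M) (x : M) : Prop := exists n : nat, x = e *+ n.

End Monoids.

From HB Require Import structures.
From mathcomp Require Import all_boot all_order all_algebra.
From mathcomp Require Import zify ring ssrAC.
From Stdlib Require Import Classical ClassicalEpsilon.
Set Implicit Arguments. Unset Strict Implicit. Unset Printing Implicit Defensive.
Import GRing.Theory.
Local Open Scope ring_scope.
Import Order.TTheory Num.Theory.

(* If p = e + M, descent along strict divisibility (well founded by Dickson's
   lemma) writes every element uniquely as f + n e with f in F, so M = F (+) N e;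
   then M \ (F^+) is the edge N e and all of (a)-(d) follow.  Conversely each of
   (a)-(d) makes (F^+) prime with complement a face of rank at most one:
   a complement of rank at least two would contain two edges meeting only in 0,
   giving a second edge outside F, a second height one prime, or a face strictly
   between F and M.  The edges come from the gap lemma: between faces whose
   ranks differ by at least two there are two covering faces of the smaller one
   meeting exactly in it, namely the rays over it through two generators of an
   irredundant generating set.  Finally an irreducible element e of the rank one
   complement divides, by saturation, every element of it, whence p = e + M. *)

(** * Homogeneous integer linear systems *)

(* Gaussian elimination on the last equation: either it is trivially satisfied
   on A, or a pivot row [i0] lets us eliminate unknown [i0]. *)
Lemma int_homogeneous_system_solvable (I : finType) (N : nat) (A : {set I})
    (C : I -> nat -> int) :
  (N < #|A|)%N ->
  exists w : I -> int, [/\ exists2 i, i \in A & w i != 0,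
     forall i, i \notin A -> w i = 0 &
     forall j, (j < N)%N -> \sum_(i in A) w i * C i j = 0].
Proof.
elim: N A C => [|N IH] A C HA.
  have [i iA] : exists i, i \in A by apply/set0Pn; rewrite -card_gt0.
  exists (fun x => (x == i)%:R); split => //; first by exists i; rewrite ?eqxx.
  by move=> x xA; case: eqP => // Hx; rewrite Hx iA in xA.
have [/forall_inP col0 | /forall_inPn [i0 i0A pivot]] :=
  boolP [forall i in A, C i N == 0].
  have [w [nz wout wsum]] := IH A C (ltnW HA).
  exists w; split => // j; rewrite ltnS leq_eqVlt => /orP [/eqP -> | /wsum //].
  by rewrite big1 // => x xA; rewrite (eqP (col0 x xA)) mulr0.
pose C' i j := C i0 N * C i j - C i N * C i0 j.
have HA' : (N < #|A :\ i0|)%N by move: HA; rewrite (cardsD1 i0 A) i0A.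
have [w' [[i1 i1A w'i1] w'out w'sum]] := IH (A :\ i0) C' HA'.
pose w i := if i == i0 then - \sum_(x in A :\ i0) w' x * C x N else C i0 N * w' i.
have sum_off_pivot j : \sum_(i in A | i != i0) w i * C i j =
                       \sum_(i in A :\ i0) C i0 N * w' i * C i j.
  rewrite [RHS](eq_bigl (fun i => (i \in A) && (i != i0))); last first.
    by move=> i; rewrite in_setD1 andbC.
  by apply: eq_bigr => i /andP [_ /negbTE i0']; rewrite /w i0'.
exists w; split.
- move: i1A; rewrite in_setD1 => /andP [i10 i1A].
  by exists i1; rewrite // /w (negbTE i10) mulf_neq0.
- move=> i iA; rewrite /w; case: eqP => [Hi | _]; first by rewrite Hi i0A in iA.
  by rewrite w'out ?mulr0 // in_setD1 negb_and iA orbT.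
move=> j Hj; rewrite (bigD1 i0) //= sum_off_pivot /w eqxx mulNr mulr_suml.
rewrite addrC -sumrB.
have elim_i0 i : C i0 N * w' i * C i j - w' i * C i N * C i0 j = w' i * C' i j.
  by rewrite /C'; ring.
under eq_bigr do rewrite elim_i0.
move: Hj; rewrite ltnS leq_eqVlt => /orP [/eqP -> | Hj]; last exact: w'sum.
by rewrite big1 // => i _; rewrite /C'; ring.
Qed.

Lemma int_pos_neg_parts (z : int) :
  z = (if 0 <= z then `|z|%N else 0%N)%:Z - (if z < 0 then `|z|%N else 0%N)%:Z.
Proof. by case: (lerP 0 z) => Hz; [rewrite gez0_abs // subr0 | have := ltW Hz; lia]. Qed.

(** * Rational span inside the group of fractions *)

Section QSpan.
Variable M : nmodType.
Hypothesis cancelM : integral_monoid M.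

Lemma integral_cancelr (x y z : M) : y + x = z + x -> y = z.
Proof. by rewrite ![_ + x]addrC => /cancelM. Qed.

(* [x] lies in the Q-span of the [h j] in [M^gp (x) Q]: [d x = sum (b j - a j) h j]. *)
Definition Qspan (N : nat) (h : 'I_N -> M) (x : M) : Prop :=
  exists (d : nat) (a b : 'I_N -> nat), (0 < d)%N /\
    x *+ d + \sum_(j < N) h j *+ a j = \sum_(j < N) h j *+ b j.

Lemma sumMn_natmul n (h : 'I_n -> M) (a : 'I_n -> nat) c :
  (\sum_(j < n) h j *+ a j) *+ c = \sum_(j < n) h j *+ (a j * c)%N.
Proof. by rewrite -sumrMnl; apply: eq_bigr => j _; rewrite mulrnA. Qed.

Lemma sumD_natmul n (h : 'I_n -> M) (a b : 'I_n -> nat) :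
  \sum_(j < n) h j *+ a j + \sum_(j < n) h j *+ b j =
  \sum_(j < n) h j *+ (a j + b j)%N.
Proof. by rewrite -big_split; apply: eq_bigr => j _; rewrite mulrnDr. Qed.

Lemma exchange_natmul_sum k N (h : 'I_N -> M) (a : 'I_k -> 'I_N -> nat)
    (P : 'I_k -> nat) :
  \sum_(i < k) (\sum_(j < N) h j *+ a i j) *+ P i =
  \sum_(j < N) h j *+ (\sum_(i < k) (a i j * P i))%N.
Proof.
under eq_bigr do rewrite sumMn_natmul.
by rewrite exchange_big /=; apply: eq_bigr => j _; rewrite -sumrMnr.
Qed.

Lemma combine_Qspan_relations k N (f : 'I_k -> M) (h : 'I_N -> M)
    (d : 'I_k -> nat) (a b : 'I_k -> 'I_N -> nat) (P Q : 'I_k -> nat) :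
  (forall i, f i *+ d i + \sum_(j < N) h j *+ a i j = \sum_(j < N) h j *+ b i j) ->
  (forall j, (\sum_(i < k) (b i j * P i) + \sum_(i < k) (a i j * Q i) =
              \sum_(i < k) (b i j * Q i) + \sum_(i < k) (a i j * P i))%N) ->
  \sum_(i < k) f i *+ (d i * P i)%N = \sum_(i < k) f i *+ (d i * Q i)%N.
Proof.
move=> rel coef.
set A := fun i => \sum_(j < N) h j *+ a i j.
set B := fun i => \sum_(j < N) h j *+ b i j.
have combine (R : 'I_k -> nat) : \sum_(i < k) f i *+ (d i * R i)%N +
    \sum_(i < k) A i *+ R i = \sum_(i < k) B i *+ R i.
  rewrite -big_split /=; apply: eq_bigr => i _.
  by rewrite /A /B -rel mulrnDl mulrnA.
set SAP := \sum_(i < k) A i *+ P i; set SAQ := \sum_(i < k) A i *+ Q i.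
have BPQ : SAQ + \sum_(i < k) B i *+ P i = SAP + \sum_(i < k) B i *+ Q i.
  rewrite /SAQ /SAP /A /B !exchange_natmul_sum -!big_split /=.
  by apply: eq_bigr => j _; rewrite -!mulrnDr addnC coef addnC.
apply: (cancelM (x := SAP + SAQ)).
rewrite -(combine P) -(combine Q) -/SAP -/SAQ in BPQ.
by rewrite [SAP + SAQ]addrC -addrA [SAP + _]addrC BPQ addrCA addrC [SAQ + SAP]addrC.
Qed.

Lemma Qindep_le_Qspan k N (f : 'I_k -> M) (h : 'I_N -> M) :
  (forall i, Qspan h (f i)) -> gp_Q_independent f -> (k <= N)%N.
Proof.
move=> span indep; rewrite leqNgt; apply/negP => ltNk.
have [d /fin_all_exists [a /fin_all_exists [b rel]]] := fin_all_exists span.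
pose C i j := oapp (fun j' : 'I_N => (b i j')%:Z - (a i j')%:Z) 0 (insub j).
have [|w [[i1 _ wi1] _ wsum]] := @int_homogeneous_system_solvable _ N [set: 'I_k] C.
  by rewrite cardsT card_ord.
pose P i := if 0 <= w i then `|w i|%N else 0%N.
pose Q i := if w i < 0 then `|w i|%N else 0%N.
have coef j : (\sum_(i < k) (b i j * P i) + \sum_(i < k) (a i j * Q i) =
               \sum_(i < k) (b i j * Q i) + \sum_(i < k) (a i j * P i))%N.
  apply/eqP; rewrite -(eqr_nat int) !natrD !natr_sum -subr_eq0.
  have E := wsum j (ltn_ord j).
  rewrite (eq_bigl xpredT) in E; last by move=> i /=; rewrite inE.
  apply/eqP; rewrite -[RHS]E -!big_split -sumrB; apply: eq_bigr => i _.
  by rewrite /C /= valK /= [w i]int_pos_neg_parts !natrM; ring.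
have := indep (fun i => d i * P i)%N (fun i => d i * Q i)%N 1%N isT.
rewrite !mulr1n.
move=> /(_ (combine_Qspan_relations (fun i => proj2 (rel i)) coef) i1) /eqP.
rewrite eqn_mul2l (negbTE (lt0n_neq0 (proj1 (rel i1)))) /= /P /Q.
by case: (lerP 0 (w i1)) => _ /eqP E; move: wi1; rewrite -absz_eq0; [rewrite E | rewrite -E].
Qed.

End QSpan.

(** * Rank of a submonoid *)

Lemma exists_max_bounded (P : nat -> Prop) B : P 0%N ->
  (forall k, P k -> (k <= B)%N) -> exists r, P r /\ forall k, P k -> (k <= r)%N.
Proof.
elim: B P => [|B IH] P P0 HB.
  by exists 0%N; split => // k /HB; rewrite leqn0 => /eqP ->.
have [PB|PBn] := classic (P B.+1); first by exists B.+1.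
apply: IH => // k Pk; move: (HB k Pk); rewrite leq_eqVlt => /orP [/eqP Ek|//].
by rewrite Ek in Pk.
Qed.

Lemma ord_S_ind n (P : 'I_n.+1 -> Prop) :
  (forall j : 'I_n, P (widen_ord (leqnSn n) j)) -> P ord_max -> forall i, P i.
Proof.
move=> Pw Pmax i; have [lt_in|] := ltnP i n.
  by have -> : i = widen_ord (leqnSn n) (Ordinal lt_in) by apply: val_inj.
move=> le_ni; rewrite (_ : i = ord_max) //.
by apply/val_inj/eqP; rewrite eqn_leq le_ni -ltnS ltn_ord.
Qed.

Section Rank.
Variable M : nmodType.
Hypothesis cancelM : integral_monoid M.

Definition extend n (f : 'I_n -> M) (y : M) (i : 'I_n.+1) : M :=
  if unlift ord_max i is Some j then f j else y.

Lemma widen_ord_lift n (j : 'I_n) : widen_ord (leqnSn n) j = lift ord_max j.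
Proof. by apply: val_inj; rewrite /= /bump leqNgt ltn_ord. Qed.

Lemma extend_widen n (f : 'I_n -> M) y j : extend f y (widen_ord (leqnSn n) j) = f j.
Proof. by rewrite /extend widen_ord_lift liftK. Qed.

Lemma extend_max n (f : 'I_n -> M) y : extend f y ord_max = y.
Proof. by rewrite /extend unlift_none. Qed.

Lemma extend_in (S : M -> Prop) n (f : 'I_n -> M) y :
  (forall j, S (f j)) -> S y -> forall i, S (extend f y i).
Proof. by move=> Sf Sy; apply: ord_S_ind => [j|]; rewrite ?extend_widen ?extend_max. Qed.

Lemma sum_extend n (f : 'I_n -> M) y (a : 'I_n.+1 -> nat) :
  \sum_(i < n.+1) extend f y i *+ a i =
  \sum_(j < n) f j *+ a (widen_ord (leqnSn n) j) + y *+ a ord_max.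
Proof.
rewrite big_ord_recr /= extend_max; congr (_ + _).
by apply: eq_bigr => j _; rewrite extend_widen.
Qed.

Lemma Qspan_extend n (f : 'I_n -> M) s x : Qspan f x -> Qspan (extend f s) x.
Proof.
move=> [d [a [b [d_gt0 E]]]].
pose lift0 (c : 'I_n -> nat) i := oapp c 0%N (unlift ord_max i).
have lift0_max c : lift0 c ord_max = 0%N by rewrite /lift0 unlift_none.
have lift0_widen c j : lift0 c (widen_ord (leqnSn n) j) = c j.
  by rewrite /lift0 widen_ord_lift liftK.
exists d, (lift0 a), (lift0 b); split => //.
rewrite !sum_extend !lift0_max !mulr0n !addr0.
by under eq_bigr do rewrite lift0_widen; under [in RHS]eq_bigr do rewrite lift0_widen.
Qed.

Lemma Qspan_gen n (h : 'I_n -> M) i : Qspan h (h i).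
Proof.
exists 1%N, (fun _ => 0%N), (fun j => (j == i) : nat); split => //.
rewrite big1 ?addr0 ?mulr1n => [|j _]; last by rewrite mulr0n.
by rewrite (bigD1 i) //= eqxx mulr1n big1 ?addr0 // => j /negbTE ->; rewrite mulr0n.
Qed.

Lemma Qspan0 n (h : 'I_n -> M) : Qspan h 0.
Proof. by exists 1%N, (fun _ => 0%N), (fun _ => 0%N); rewrite mul0rn add0r. Qed.

Lemma QspanD n (h : 'I_n -> M) x y : Qspan h x -> Qspan h y -> Qspan h (x + y).
Proof.
move=> [d [a [b [d_gt0 E]]]] [d' [a' [b' [d'_gt0 E']]]].
exists (d * d')%N, (fun j => a j * d' + a' j * d)%N, (fun j => b j * d' + b' j * d)%N.
split; first by rewrite muln_gt0 d_gt0 d'_gt0.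
rewrite -!sumD_natmul -!sumMn_natmul -E -E' !mulrnDl -!mulrnA [(d' * d)%N]mulnC.
by rewrite addrACA.
Qed.

Lemma QspanMn n (h : 'I_n -> M) x c : Qspan h x -> Qspan h (x *+ c).
Proof.
move=> Hx; elim: c => [|c IH]; first by rewrite mulr0n; apply: Qspan0.
by rewrite mulrS; apply: QspanD.
Qed.

Lemma Qspan_cancel n (h : 'I_n -> M) x m u v : (0 < m)%N -> x *+ m + u = v ->
  Qspan h u -> Qspan h v -> Qspan h x.
Proof.
move=> m_gt0 E [du [au [bu [du_gt0 Eu]]]] [dv [av [bv [dv_gt0 Ev]]]].
exists (m * (du * dv))%N, (fun j => bu j * dv + av j * du)%N,
       (fun j => bv j * du + au j * dv)%N.
split; first by rewrite !muln_gt0 m_gt0 du_gt0 dv_gt0.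
rewrite -!sumD_natmul -!sumMn_natmul -Eu -Ev !mulrnDl -!mulrnA.
have Em : x *+ (m * (du * dv)) + u *+ (du * dv) = v *+ (dv * du).
  by rewrite -E mulrnDl mulrnA mulnC.
by rewrite -Em -!addrA; congr (_ + (_ + _)); rewrite addrC.
Qed.

Lemma not_Qindep k (f : 'I_k -> M) : ~ gp_Q_independent f ->
  exists (a b : 'I_k -> nat) (n : nat) (i : 'I_k), [/\ (0 < n)%N,
    (\sum_(j < k) f j *+ a j) *+ n = (\sum_(j < k) f j *+ b j) *+ n & a i <> b i].
Proof.
move=> dep; apply: NNPP => nrel; apply: dep => a b n n_gt0 E i.
by apply: NNPP => neq; apply: nrel; exists a, b, n, i.
Qed.

(* The coefficient of [y] in a nontrivial relation of [extend f y] is nonzero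
   by independence of [f]; solving for it puts [y] in the span of [f]. *)
Lemma Qspan_of_Qdependent_extend n (f : 'I_n -> M) y :
  gp_Q_independent f -> ~ gp_Q_independent (extend f y) -> Qspan f y.
Proof.
move=> indep /not_Qindep [a [b [c [i [c_gt0 E abi]]]]].
move: E; rewrite !sum_extend !mulrnDl !sumMn_natmul -!(mulrnA y).
set a' := fun j => a (widen_ord (leqnSn n) j).
set b' := fun j => b (widen_ord (leqnSn n) j).
set A := \sum_(j < n) _; set B := \sum_(j < n) _ => E.
case: (ltngtP (a ord_max) (b ord_max)) => cmp.
- exists ((b ord_max - a ord_max) * c)%N, (fun j => b' j * c)%N, (fun j => a' j * c)%N.
  split; first by rewrite muln_gt0 subn_gt0 cmp c_gt0.
  apply: (@integral_cancelr _ cancelM (y *+ (a ord_max * c)%N)).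
  by rewrite E addrAC -mulrnDr -mulnDl (subnK (ltnW cmp)) addrC.
- exists ((a ord_max - b ord_max) * c)%N, (fun j => a' j * c)%N, (fun j => b' j * c)%N.
  split; first by rewrite muln_gt0 subn_gt0 cmp c_gt0.
  apply: (@integral_cancelr _ cancelM (y *+ (b ord_max * c)%N)).
  by rewrite -E addrAC -mulrnDr -mulnDl (subnK (ltnW cmp)) addrC.
exfalso; apply: abi; move: i; apply: ord_S_ind => // j.
rewrite cmp in E; have := indep a' b' c c_gt0; rewrite !sumMn_natmul.
by move=> /(_ (integral_cancelr cancelM E) j).
Qed.

Lemma submonoid_natmul (S : M -> Prop) x m : submonoid S -> S x -> S (x *+ m).
Proof.
move=> [S0 SD] Sx; elim: m => [|m IH]; first by rewrite mulr0n.
by rewrite mulrS; apply: SD.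
Qed.

Lemma submonoid_sum (S : M -> Prop) n (h : 'I_n -> M) (a : 'I_n -> nat) :
  submonoid S -> (forall j, S (h j)) -> S (\sum_(j < n) h j *+ a j).
Proof.
move=> SM Sh; case: (SM) => S0 SD.
by elim/big_ind: _ => // j _; apply: submonoid_natmul.
Qed.

Lemma face_natmul (S : M -> Prop) x m : face S -> (0 < m)%N -> S (x *+ m) -> S x.
Proof. by move=> [_ Ssplit]; case: m => // m _; rewrite mulrS => /Ssplit []. Qed.

Lemma Qindep_extend_face (S : M -> Prop) n (f : 'I_n -> M) y : face S ->
  (forall i, S (f i)) -> gp_Q_independent f -> ~ S y -> gp_Q_independent (extend f y).
Proof.
move=> FS Sf indep Sy; apply: NNPP => /(Qspan_of_Qdependent_extend indep).
move=> [d [a [b [d_gt0 E]]]]; apply/Sy/(face_natmul FS d_gt0).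
have : S (\sum_(j < n) f j *+ b j) by apply: submonoid_sum => //; case: FS.
by rewrite -E; case: FS => _ Ssplit /Ssplit [].
Qed.

Variables (N0 : nat) (g : 'I_N0 -> M).
Hypothesis gen : forall x : M, exists a : 'I_N0 -> nat, x = \sum_(i < N0) g i *+ a i.

Lemma Qspan_generators x : Qspan g x.
Proof.
have [a ->] := gen x; exists 1%N, (fun _ => 0%N), a; split => //.
by rewrite mulr1n [X in _ + X]big1 ?addr0 // => j _; rewrite mulr0n.
Qed.

Lemma rank_spec (S : M -> Prop) : is_rank S (rank S).
Proof.
rewrite /rank; apply: epsilon_spec.
pose indep_in k := exists f : 'I_k -> M, (forall i, S (f i)) /\ gp_Q_independent f.
have [|k [f [_ indep]]|r [[f [Sf indep]] r_max]] := @exists_max_bounded indep_in N0.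
- by exists (fun _ => 0); split => [[]|a b n _ _ []].
- exact: Qindep_le_Qspan (fun i => Qspan_generators (f i)) indep.
by exists r; split; [exists f | move=> k f' Sf' indep'; apply: r_max; exists f'].
Qed.

Lemma rank_ge (S : M -> Prop) k (f : 'I_k -> M) :
  (forall i, S (f i)) -> gp_Q_independent f -> (k <= rank S)%N.
Proof. by have [_] := rank_spec S; apply. Qed.

Lemma rank_basis (S : M -> Prop) :
  exists f : 'I_(rank S) -> M, (forall i, S (f i)) /\ gp_Q_independent f.
Proof. by have [] := rank_spec S. Qed.

Lemma le_rank (S T : M -> Prop) : (forall x, S x -> T x) -> (rank S <= rank T)%N.
Proof.
move=> ST; have [f [Sf indep]] := rank_basis S.
by apply: (rank_ge (f := f)) => // i; apply/ST.
Qed.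

Lemma eq_rank (S T : M -> Prop) : (forall x, S x <-> T x) -> rank S = rank T.
Proof. by move=> ST; apply/eqP; rewrite eqn_leq !le_rank // => x /ST. Qed.

Lemma rank_le_Qspan (S : M -> Prop) n (h : 'I_n -> M) :
  (forall x, S x -> Qspan h x) -> (rank S <= n)%N.
Proof.
move=> span; have [f [Sf indep]] := rank_basis S.
by apply: (Qindep_le_Qspan cancelM _ indep) => i; apply/span.
Qed.

Lemma rank_lt_face (S T : M -> Prop) y : face S -> (forall x, S x -> T x) ->
  T y -> ~ S y -> (rank S < rank T)%N.
Proof.
move=> FS ST Ty Sy; have [f [Sf indep]] := rank_basis S.
apply: (@rank_ge T _ (extend f y)); last exact: Qindep_extend_face FS Sf indep Sy.
by apply: extend_in => // j; apply/ST.
Qed.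

Lemma Qspan_rank_basis (S : M -> Prop) (f : 'I_(rank S) -> M) x :
  (forall i, S (f i)) -> gp_Q_independent f -> S x -> Qspan f x.
Proof.
move=> Sf indep Sx; apply: Qspan_of_Qdependent_extend => // indep'.
have := @rank_ge S _ (extend f x) (extend_in Sf Sx) indep'.
by rewrite ltnn.
Qed.

End Rank.

(** * Descent in finitely generated sharp monoids *)

Lemma exists_argmin_after (v : nat -> nat) a :
  exists j, (a < j)%N /\ forall j', (a < j')%N -> (v j <= v j')%N.
Proof.
apply: NNPP => nomin.
suff lb n j : (a < j)%N -> (n <= v j)%N by move: (lb (v a.+1).+1 a.+1 (ltnSn a)); rewrite ltnn.
elim: n j => [//|n IH] j aj.
rewrite ltn_neqAle IH // andbT; apply/eqP => vj.
by apply: nomin; exists j; split => // j' aj'; rewrite -vj; apply: IH.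
Qed.

Lemma exists_nondecreasing_subseq (v : nat -> nat) : exists tau : nat -> nat,
  (forall k, tau k < tau k.+1)%N /\ forall k, (v (tau k) <= v (tau k.+1))%N.
Proof.
pose next a := proj1_sig (constructive_indefinite_description _ (exists_argmin_after v a)).
have nextP a : (a < next a)%N /\ forall j', (a < j')%N -> (v (next a) <= v j')%N.
  exact: proj2_sig (constructive_indefinite_description _ (exists_argmin_after v a)).
exists (fun k => iter k.+1 next 0%N); split => k.
  by rewrite [X in (_ < X)%N]iterS; case: (nextP (iter k.+1 next 0%N)).
rewrite [X in (_ <= v X)%N]iterS iterS; have [lt_next min_next] := nextP (iter k next 0%N).
by apply/min_next/(ltn_trans lt_next); case: (nextP (next (iter k next 0%N))).
Qed.

Lemma dickson N (u : nat -> nat -> nat) : exists sigma : nat -> nat,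
  (forall k, sigma k < sigma k.+1)%N /\
  forall t, (t < N)%N -> forall k, (u (sigma k) t <= u (sigma k.+1) t)%N.
Proof.
elim: N => [|N [sig [sig_incr sig_mono]]]; first by exists id.
have [tau [tau_incr tau_mono]] := exists_nondecreasing_subseq (fun k => u (sig k) N).
exists (fun k => sig (tau k)); split => [k|t].
  by apply: (homo_ltn ltn_trans sig_incr).
rewrite ltnS leq_eqVlt => /orP [/eqP -> //|ltN] k.
apply: (homo_leq (r := fun m n => m <= n)%N leqnn (fun _ _ _ => @leq_trans _ _ _)
  (fun l => sig_mono t ltN l)).
exact: ltnW.
Qed.

Section Descent.
Variable M : nmodType.
Hypothesis cancelM : integral_monoid M.
Hypothesis sharpM : sharp_monoid M.

Lemma sharp_add_eq0 (x y : M) : x + y = 0 -> x = 0 /\ y = 0.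
Proof. by move=> xy0; split; apply: sharpM; [exists y | exists x; rewrite addrC]. Qed.

Lemma natmul_eq0 (x : M) c : (0 < c)%N -> x *+ c = 0 -> x = 0.
Proof. by case: c => // c _; rewrite mulrS => /sharp_add_eq0 []. Qed.

Definition strict_divisor (y x : M) : Prop := exists z, z <> 0 /\ x = y + z.

Variables (N0 : nat) (g : 'I_N0 -> M).
Hypothesis gen : forall x : M, exists a : 'I_N0 -> nat, x = \sum_(i < N0) g i *+ a i.

(* Along a Dickson subsequence of coordinate vectors, [x i] divides [x j];
   combined with [x j] strictly dividing [x i] this contradicts sharpness. *)
Lemma no_strict_descending_chain (x z : nat -> M) :
  (forall k, x k = x k.+1 + z k) -> (forall k, z k <> 0) -> False.
Proof.
move=> step z_neq0.
pose c k := proj1_sig (constructive_indefinite_description _ (gen (x k))).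
have xc k : x k = \sum_(i < N0) g i *+ c k i.
  exact: proj2_sig (constructive_indefinite_description _ (gen (x k))).
have [sig [sig_incr sig_mono]] := dickson N0 (fun k t => oapp (c k) 0%N (insub t)).
set i := sig 0%N; set j := sig 1%N.
have le_cij (t : 'I_N0) : (c i t <= c j t)%N.
  by have := sig_mono t (ltn_ord t) 0%N; rewrite /= valK.
have xj : x j = x i + \sum_(t < N0) g t *+ (c j t - c i t).
  by rewrite !xc sumD_natmul; apply: eq_bigr => t _; rewrite subnKC.
have telescope d : exists Z, x i = x (i + d.+1)%N + (z i + Z).
  elim: d => [|d [Z xZ]]; first by exists 0; rewrite addr0 addn1.
  exists (z (i + d.+1)%N + Z); rewrite xZ [in LHS]step addnS.
  by rewrite !addnS !addrA; congr (_ + _); rewrite addrAC.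
have [Z] := telescope (j - i.+1)%N.
rewrite addnS -addSn subnKC; last exact: sig_incr.
rewrite xj -addrA -{1}[x i]addr0 => /cancelM /esym.
by rewrite addrCA => /sharp_add_eq0 [/z_neq0].
Qed.

Lemma strict_divisor_wf : well_founded strict_divisor.
Proof.
move=> x0; apply: NNPP => not_acc.
have step x : ~ Acc strict_divisor x ->
    exists p : M * M, [/\ p.2 <> 0, x = p.1 + p.2 & ~ Acc strict_divisor p.1].
  move=> nacc; apply: NNPP => nostep; apply: nacc; constructor => y [z [z0 xyz]].
  by apply: NNPP => nacc_y; apply: nostep; exists (y, z).
pose P x (p : M * M) := [/\ p.2 <> 0, x = p.1 + p.2 & ~ Acc strict_divisor p.1].
pose next x := epsilon (inhabits (0, 0)) (P x).
pose xs k := iter k (fun x => (next x).1) x0.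
have xs_nacc k : ~ Acc strict_divisor (xs k).
  elim: k => [//|k IH]; rewrite /xs iterS -/(xs k).
  by have [] := epsilon_spec (inhabits (0, 0)) _ (step _ IH).
apply: (@no_strict_descending_chain xs (fun k => (next (xs k)).2)) => k.
  by have [] := epsilon_spec (inhabits (0, 0)) _ (step _ (xs_nacc k)).
by have [] := epsilon_spec (inhabits (0, 0)) _ (step _ (xs_nacc k)).
Qed.

End Descent.

(** * Faces covering a face *)

Section FaceBasics.
Variables (M : nmodType) (S : M -> Prop).
Hypothesis FS : face S.

Lemma face0 : S 0. Proof. by case: FS => [[]]. Qed.
Lemma faceD x y : S x -> S y -> S (x + y). Proof. by case: FS => [[_ SD]] _; apply: SD. Qed.
Lemma face_split x y : S (x + y) -> S x /\ S y. Proof. by case: FS => _; apply. Qed.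
Lemma faceMn x m : S x -> S (x *+ m). Proof. by apply: submonoid_natmul; case: FS. Qed.

End FaceBasics.

Section CoveringFaces.
Variable M : nmodType.
Hypothesis cancelM : integral_monoid M.
Variables (N0 : nat) (g : 'I_N0 -> M).
Hypothesis gen : forall x : M, exists a : 'I_N0 -> nat, x = \sum_(i < N0) g i *+ a i.

Variables Psi Gam : M -> Prop.
Hypothesis fPsi : face Psi.
Hypothesis fGam : face Gam.
Hypothesis PsiGam : forall x, Psi x -> Gam x.

(* Working modulo the face [Psi]: [rel_cone I x] says that [x] lies in the
   rational cone spanned by the generators [g j], [j \in I], and [rel_ray s x]
   that it lies on the ray through [s]. *)
Definition rel_cone (I : {set 'I_N0}) (x : M) : Prop :=
  exists n (c : 'I_N0 -> nat) psi psi', [/\ (0 < n)%N, Psi psi, Psi psi' &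
     x *+ n + psi = \sum_(j in I) g j *+ c j + psi'].

Definition rel_ray (s x : M) : Prop :=
  exists m a phi phi', [/\ (0 < m)%N, Psi phi, Psi phi' & x *+ m + phi = s *+ a + phi'].

Definition covering_face (E : M -> Prop) : Prop :=
  [/\ face E, (forall x, Psi x -> E x), (forall x, E x -> Gam x),
      (exists x, E x /\ ~ Psi x) & (rank E <= (rank Psi).+1)%N].

Lemma sum_inD_natmul (I : {set 'I_N0}) (a b : 'I_N0 -> nat) :
  \sum_(j in I) g j *+ a j + \sum_(j in I) g j *+ b j =
  \sum_(j in I) g j *+ (a j + b j)%N.
Proof. by rewrite -big_split; apply: eq_bigr => j _; rewrite mulrnDr. Qed.

Lemma sum_inMn_natmul (I : {set 'I_N0}) (a : 'I_N0 -> nat) c :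
  (\sum_(j in I) g j *+ a j) *+ c = \sum_(j in I) g j *+ (a j * c)%N.
Proof. by rewrite -sumrMnl; apply: eq_bigr => j _; rewrite mulrnA. Qed.

Lemma rel_cone_setD1 (I : {set 'I_N0}) i x :
  i \in I -> rel_cone (I :\ i) (g i) -> rel_cone I x -> rel_cone (I :\ i) x.
Proof.
move=> iI [k [d [chi [chi' [k_gt0 Pchi Pchi' Egi]]]]] [n [c [psi [psi' [n_gt0 Ppsi Ppsi' Ex]]]]].
exists (n * k)%N, (fun j => d j * c i + c j * k)%N, (psi *+ k + chi *+ c i),
  (chi' *+ c i + psi' *+ k).
split; first by rewrite muln_gt0 n_gt0 k_gt0.
- by apply: (faceD fPsi); apply: (faceMn fPsi).
- by apply: (faceD fPsi); apply: (faceMn fPsi).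
rewrite (big_setD1 _ iI) in Ex.
rewrite -sum_inD_natmul -!sum_inMn_natmul mulrnA addrA -mulrnDl Ex !mulrnDl.
rewrite -mulrnA mulnC mulrnA addrAC [_ + chi *+ c i]addrAC -mulrnDl Egi mulrnDl.
by rewrite -!addrA; congr (_ + _); rewrite addrCA.
Qed.

Lemma rel_ray_natmul s x m : (0 < m)%N -> rel_ray s (x *+ m) -> rel_ray s x.
Proof.
move=> m_gt0 [m' [a [phi [phi' [m'_gt0 Pphi Pphi' E]]]]].
exists (m * m')%N, a, phi, phi'; split => //; first by rewrite muln_gt0 m_gt0 m'_gt0.
by rewrite mulrnA.
Qed.

Lemma rel_rayD s x y : rel_ray s x -> rel_ray s y -> rel_ray s (x + y).
Proof.
move=> [m [a [phi [phi' [m_gt0 P1 P2 E]]]]] [m' [a' [chi [chi' [m'_gt0 P1' P2' E']]]]].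
exists (m * m')%N, (a * m' + a' * m)%N, (phi *+ m' + chi *+ m), (phi' *+ m' + chi' *+ m).
split; first by rewrite muln_gt0 m_gt0 m'_gt0.
- by apply: (faceD fPsi); apply: (faceMn fPsi).
- by apply: (faceD fPsi); apply: (faceMn fPsi).
rewrite mulrnDl mulrnDr mulrnA [(m * m')%N]mulnC mulrnA !mulrnA.
by rewrite addrACA -!mulrnDl E E' !mulrnDl addrACA.
Qed.

Lemma rel_ray_base s x : Psi x -> rel_ray s x.
Proof.
move=> Px; exists 1%N, 0%N, 0, x; split => //; first exact: (face0 fPsi).
by rewrite mulr1n mulr0n addr0 add0r.
Qed.

Lemma rel_ray_refl s : rel_ray s s.
Proof. by exists 1%N, 1%N, 0, 0; split => //; apply: (face0 fPsi). Qed.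

Lemma rel_ray_sub s x : Gam s -> rel_ray s x -> Gam x.
Proof.
move=> Gs [m [a [phi [phi' [m_gt0 P1 P2 E]]]]].
have : Gam (x *+ m + phi) by rewrite E; apply: (faceD fGam); [apply: (faceMn fGam)|apply: PsiGam].
by move=> /(face_split fGam) [Gxm _]; apply: (face_natmul fGam m_gt0).
Qed.

Lemma rank_rel_ray s : (rank (rel_ray s) <= (rank Psi).+1)%N.
Proof.
have [f [Psi_f indep]] := rank_basis cancelM gen Psi.
apply: (rank_le_Qspan cancelM gen (h := extend f s)).
move=> x [m [a [phi [phi' [m_gt0 P1 P2 E]]]]].
have span_Psi y : Psi y -> Qspan (extend f s) y.
  by move=> Py; apply/Qspan_extend/(Qspan_rank_basis cancelM gen Psi_f indep Py).
apply: (Qspan_cancel m_gt0 E (span_Psi _ P1)); apply: QspanD (span_Psi _ P2).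
by apply: QspanMn; have := Qspan_gen (extend f s) ord_max; rewrite extend_max.
Qed.

Lemma rel_ray_meet s0 s1 x : rel_ray s0 x -> rel_ray s1 x -> ~ Psi x -> rel_ray s0 s1.
Proof.
move=> [m [a [phi [phi' [m_gt0 P1 P2 E]]]]] [m' [a' [chi [chi' [m'_gt0 P1' P2' E']]]]] Px.
have a'_gt0 : (0 < a')%N.
  rewrite lt0n; apply/eqP => a'0; apply/Px/(face_natmul fPsi m'_gt0).
  by have /(face_split fPsi) [] : Psi (x *+ m' + chi) by rewrite E' a'0 mulr0n add0r.
exists (a' * m)%N, (a * m')%N, (chi' *+ m + phi *+ m'), (phi' *+ m' + chi *+ m).
split; first by rewrite muln_gt0 a'_gt0 m_gt0.
- by apply: (faceD fPsi); apply: (faceMn fPsi).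
- by apply: (faceD fPsi); apply: (faceMn fPsi).
rewrite mulrnA addrA -mulrnDl -E' mulrnDl -mulrnA mulnC mulrnA.
by rewrite addrAC -mulrnDl E mulrnDl mulrnA addrA.
Qed.

Section IrredundantCover.
Variable I : {set 'I_N0}.
Hypothesis I_in_Gam : forall j, j \in I -> Gam (g j).
Hypothesis I_covers : forall x, Gam x -> rel_cone I x.
Hypothesis irredundant : forall i, i \in I -> ~ (forall x, Gam x -> rel_cone (I :\ i) x).

Lemma gen_notin_base i : i \in I -> ~ Psi (g i).
Proof.
move=> iI Pgi; apply: (irredundant iI) => x Gx.
apply: (rel_cone_setD1 iI) (I_covers Gx).
exists 1%N, (fun _ => 0%N), 0, (g i); split => //; first exact: (face0 fPsi).
by rewrite big1 ?add0r ?addr0 ?mulr1n // => j _; rewrite mulr0n.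
Qed.

(* If a relation puts [n] copies of [g i] on one side, irredundancy forces
   the coefficient of [g i] on the other side to absorb them, so the other
   generators contribute only to [Psi]. *)
Lemma irredundant_relation i (c : 'I_N0 -> nat) X Y n : i \in I -> Psi X -> Psi Y ->
  \sum_(j in I) g j *+ c j + X = g i *+ n + Y -> Psi (\sum_(j in I :\ i) g j *+ c j).
Proof.
move=> iI PX PY; rewrite (big_setD1 _ iI) /=; set R := \sum_(j in I :\ i) _ => E.
have [lt_cn|le_nc] := ltnP (c i) n.
  exfalso; apply: (irredundant iI) => x Gx; apply: (rel_cone_setD1 iI) (I_covers Gx).
  exists (n - c i)%N, c, Y, X; split => //; first by rewrite subn_gt0.
  apply: (cancelM (x := g i *+ c i)).
  by rewrite addrA -mulrnDr (subnKC (ltnW lt_cn)) -E addrA.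
have : g i *+ n + (g i *+ (c i - n) + R + X) = g i *+ n + Y.
  by rewrite -E !addrA -mulrnDr subnKC.
move=> /cancelM Y_eq; rewrite -Y_eq in PY.
by have [/(face_split fPsi) [_ PR] _] := face_split fPsi PY.
Qed.

Lemma rel_ray_extremal i u v psi psi' n : i \in I -> Gam u -> Gam v -> Psi psi ->
  Psi psi' -> u + v + psi = g i *+ n + psi' -> rel_ray (g i) u.
Proof.
move=> iI Gu Gv Ppsi Ppsi' E.
have [m1 [al [c1 [c1' [m1_gt0 P1 P1' Eu]]]]] := I_covers Gu.
have [m2 [be [c2 [c2' [m2_gt0 P2 P2' Ev]]]]] := I_covers Gv.
pose al' j := (al j * m2)%N; pose be' j := (be j * m1)%N.
have Eu' : u *+ (m1 * m2) + c1 *+ m2 = \sum_(j in I) g j *+ al' j + c1' *+ m2.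
  by rewrite -sum_inMn_natmul -mulrnDl -Eu mulrnDl mulrnA.
have Ev' : v *+ (m1 * m2) + c2 *+ m1 = \sum_(j in I) g j *+ be' j + c2' *+ m1.
  by rewrite -sum_inMn_natmul -mulrnDl -Ev mulrnDl mulnC mulrnA.
have rel : \sum_(j in I) g j *+ (al' j + be' j)%N +
    (c1' *+ m2 + c2' *+ m1 + psi *+ (m1 * m2)) =
    g i *+ (n * (m1 * m2)) + (psi' *+ (m1 * m2) + c1 *+ m2 + c2 *+ m1).
  rewrite -sum_inD_natmul !addrA [LHS](ACl ((1*3)*(2*4)*5)) /= -Eu' -Ev'.
  by rewrite !addrA [LHS](ACl (1*3*5*2*4)) /= -!mulrnDl E mulrnDl -mulrnA.
have := irredundant_relation iI _ _ rel.
rewrite -sum_inD_natmul => /(_ _ _) /(face_split fPsi) [||Pal _].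
- by apply: (faceD fPsi); [apply: (faceD fPsi)|]; apply: (faceMn fPsi).
- by apply: (faceD fPsi); [apply: (faceD fPsi)|]; apply: (faceMn fPsi).
exists (m1 * m2)%N, (al' i), (c1 *+ m2), (\sum_(j in I :\ i) g j *+ al' j + c1' *+ m2).
split; first by rewrite muln_gt0 m1_gt0 m2_gt0.
- exact: (faceMn fPsi).
- by apply: (faceD fPsi) => //; apply: (faceMn fPsi).
by rewrite Eu' (big_setD1 _ iI) addrA.
Qed.

Lemma rel_ray_face i : i \in I -> face (rel_ray (g i)).
Proof.
move=> iI; split; first split.
- exact/rel_ray_base/(face0 fPsi).
- by move=> x y; apply: rel_rayD.
move=> x y [m [a [phi [phi' [m_gt0 P1 P2 E]]]]].
have : Gam (x *+ m + y *+ m + phi).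
  rewrite -mulrnDl E; apply: (faceD fGam); last exact: PsiGam.
  exact/(faceMn fGam)/I_in_Gam.
move=> /(face_split fGam) [/(face_split fGam) [Gxm Gym] _].
split; apply: (rel_ray_natmul m_gt0).
- by apply: (rel_ray_extremal (n := a) iI Gxm Gym P1 P2); rewrite -mulrnDl.
- apply: (rel_ray_extremal (n := a) iI Gym Gxm P1 P2).
  by rewrite [y *+ m + _]addrC -mulrnDl.
Qed.

Lemma rel_ray_covering i : i \in I -> covering_face (rel_ray (g i)).
Proof.
move=> iI; split.
- exact: rel_ray_face.
- by move=> x; apply: rel_ray_base.
- by move=> x; apply/rel_ray_sub/I_in_Gam.
- by exists (g i); split; [apply: rel_ray_refl | apply: gen_notin_base].
exact: rank_rel_ray.
Qed.

(* If all the rays through the generators agreed, [Gam] would be one ray over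
   [Psi], of rank at most [rank Psi + 1]. *)
Lemma two_covering_faces_irredundant : (rank Psi + 2 <= rank Gam)%N ->
  exists E1 E2, [/\ covering_face E1, covering_face E2 & forall x, E1 x -> E2 x -> Psi x].
Proof.
move=> rank_gap.
have [i0 i0I] : exists i0, i0 \in I.
  apply: NNPP => I0; suff GamPsi x : Gam x -> Psi x.
    by have := le_rank cancelM gen GamPsi; lia.
  move=> /I_covers [n [c [psi [psi' [n_gt0 P1 P2 E]]]]].
  rewrite big_pred0 ?add0r in E => [|j]; last by apply/negP => jI; apply: I0; exists j.
  apply: (face_natmul fPsi n_gt0).
  by have /(face_split fPsi) [] : Psi (x *+ n + psi) by rewrite E.
have [same_ray|/not_all_ex_not [i1 ni1]] :=
  classic (forall i, i \in I -> rel_ray (g i0) (g i)); last first.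
  have i1I := not_imply_elim _ _ ni1; have nray := not_imply_elim2 _ _ ni1.
  exists (rel_ray (g i0)), (rel_ray (g i1)).
  split; [exact: rel_ray_covering | exact: rel_ray_covering |].
  by move=> x R0 R1; apply: NNPP => Px; apply/nray/(rel_ray_meet R0 R1 Px).
exfalso.
have Fray := rel_ray_face i0I.
suff GamR x : Gam x -> rel_ray (g i0) x.
  by have := le_rank cancelM gen GamR; have := rank_rel_ray (g i0); lia.
move=> /I_covers [n [c [psi [psi' [n_gt0 P1 P2 E]]]]].
apply: (rel_ray_natmul n_gt0).
have : rel_ray (g i0) (x *+ n + psi).
  rewrite E; apply: rel_rayD; last exact: rel_ray_base.
  elim/big_ind: _ => [||j /same_ray]; first exact: (face0 Fray).
    exact: rel_rayD.
  exact: (faceMn Fray).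
by move=> /(face_split Fray) [].
Qed.

End IrredundantCover.

Lemma two_covering_faces_of_cover n (I : {set 'I_N0}) : (#|I| <= n)%N ->
  (forall j, j \in I -> Gam (g j)) -> (forall x, Gam x -> rel_cone I x) ->
  (rank Psi + 2 <= rank Gam)%N ->
  exists E1 E2, [/\ covering_face E1, covering_face E2 & forall x, E1 x -> E2 x -> Psi x].
Proof.
elim: n I => [|n IH] I card_I I_in_Gam I_covers rank_gap.
  apply: (two_covering_faces_irredundant I_in_Gam I_covers) => // i.
  by move: card_I; rewrite leqn0 => /eqP /cards0_eq ->; rewrite inE.
have [[i [iI I_i_covers]]|irred] :=
  classic (exists i, i \in I /\ forall x, Gam x -> rel_cone (I :\ i) x).
  apply: (IH (I :\ i)) => //; first by move: card_I; rewrite (cardsD1 i) iI.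
  by move=> j; rewrite in_setD1 => /andP [_ /I_in_Gam].
apply: (two_covering_faces_irredundant I_in_Gam I_covers) => // i iI covers.
by apply: irred; exists i.
Qed.

Lemma exists_two_covering_faces : (rank Psi + 2 <= rank Gam)%N ->
  exists E1 E2, [/\ covering_face E1, covering_face E2 & forall x, E1 x -> E2 x -> Psi x].
Proof.
pose inGam j := if excluded_middle_informative (Gam (g j)) then true else false.
have inGamP j : reflect (Gam (g j)) (inGam j).
  by rewrite /inGam; case: excluded_middle_informative => ?; constructor.
apply: (@two_covering_faces_of_cover _ [set j | inGam j]) => // [j|x Gx].
  by rewrite inE => /inGamP.
have [a Ea] := gen x.
exists 1%N, a, 0, 0; split => //; try exact: (face0 fPsi).
rewrite mulr1n !addr0 Ea (bigID inGam) /= [X in _ + X]big1 ?addr0.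
  by apply: eq_bigl => j; rewrite inE.
move=> j /inGamP notGj; case Ha: (a j) => [|k]; first by rewrite mulr0n.
move: Gx; rewrite Ea (bigD1 j) //= Ha mulrS -addrA.
by move=> /(face_split fGam) [].
Qed.

End CoveringFaces.

(** * Faces, facets and edges *)

Section FaceLattice.
Variable M : nmodType.
Hypothesis cancelM : integral_monoid M.
Hypothesis sharpM : sharp_monoid M.
Variables (N0 : nat) (g : 'I_N0 -> M).
Hypothesis gen : forall x : M, exists a : 'I_N0 -> nat, x = \sum_(i < N0) g i *+ a i.

Lemma natmul_inj (x : M) a b : x <> 0 -> x *+ a = x *+ b -> a = b.
Proof.
wlog lt_ab : a b / (a < b)%N => [hwlog x0 E|x0 E].
  by case: (ltngtP a b) => // cmp; [|apply/esym]; apply: hwlog.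
exfalso; apply/x0/(natmul_eq0 sharpM (c := (b - a)%N)); first by rewrite subn_gt0.
by apply: (cancelM (x := x *+ a)); rewrite -mulrnDr subnKC ?(ltnW lt_ab) // addr0.
Qed.

Lemma face_setT : face (fun _ : M => True).
Proof. by []. Qed.

Lemma face_eq0 : face (fun x : M => x = 0).
Proof.
split; first by split => // x y -> ->; rewrite addr0.
by move=> x y /(sharp_add_eq0 sharpM).
Qed.

Lemma prime_compl_face (q : M -> Prop) : prime_ideal q -> face (fun x => ~ q x).
Proof.
move=> [qideal qcompl]; split => // x y nqxy.
by split => qz; apply: nqxy; [|rewrite addrC]; apply: qideal.
Qed.

Lemma rank_eq0 : rank (fun x : M => x = 0) = 0%N.
Proof.
apply/eqP; rewrite -leqn0; apply: (rank_le_Qspan cancelM gen (h := fun i : 'I_0 => 0)).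
by move=> x ->; apply: Qspan0.
Qed.

Lemma rank_lt_rk (S : M -> Prop) y : face S -> ~ S y -> (rank S < rk M)%N.
Proof. by move=> FS Sy; apply: (rank_lt_face cancelM gen FS (fun _ _ => I) I Sy). Qed.

(* Climb through covering faces avoiding [y] until the corank is one. *)
Lemma exists_facet_avoiding (S : M -> Prop) y : face S -> ~ S y ->
  exists T, [/\ face T, (forall x, S x -> T x), ~ T y & rank T = (rk M).-1].
Proof.
move: {2}(rk M - rank S)%N (leqnn (rk M - rank S)) => d.
elim: d S => [|d IH] S corank FS Sy; have lt_rk := rank_lt_rk FS Sy.
  by exfalso; move: corank; rewrite leqn0 subn_eq0 leqNgt lt_rk.
have [lt_rk2|] := leqP (rank S + 2) (rk M); last by exists S; split => //; lia.
have [E1 [E2 [[F1 S1 _ [x1 [E1x1 Sx1]] _] [F2 S2 _ [x2 [E2x2 Sx2]] _] E12]]] :=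
  exists_two_covering_faces cancelM gen FS face_setT (fun _ _ => I) lt_rk2.
have [E [FE SE Ey lt_SE]] : exists E, [/\ face E, (forall x, S x -> E x), ~ E y &
    (rank S < rank E)%N].
  have [E1y|E1y] := classic (E1 y); last first.
    by exists E1; split => //; apply: (rank_lt_face cancelM gen FS S1 E1x1 Sx1).
  have [E2y|E2y] := classic (E2 y); first by exfalso; apply/Sy/E12.
  by exists E2; split => //; apply: (rank_lt_face cancelM gen FS S2 E2x2 Sx2).
have [T [FT ET Ty rT]] := IH E ltac:(lia) FE Ey.
by exists T; split => // x /SE /ET.
Qed.

Lemma facet_compl_prime (T : M -> Prop) : face T -> rank T = (rk M).-1 ->
  (0 < rk M)%N -> prime_ideal (fun x => ~ T x) /\ height (fun x => ~ T x) = 1%N.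
Proof.
move=> FT rT rk_gt0; split.
  split; first by move=> x y Tx Txy; apply/Tx/(face_split FT Txy).1.
  by split => [|x y Tx Ty]; apply; [apply: face0 | apply: faceD; apply: NNPP].
rewrite /height (eq_rank cancelM gen (T := T)) ?rT; first lia.
by move=> x; split => [/NNPP|Tx /(_ Tx)].
Qed.

Lemma two_edges_in_face (G : M -> Prop) : face G -> (2 <= rank G)%N ->
  exists E1 E2 x1 x2, [/\ face E1 /\ face E2,
    (forall x, E1 x -> G x) /\ (forall x, E2 x -> G x),
    [/\ E1 x1, E2 x2, x1 <> 0, x2 <> 0 & forall x, E1 x -> E2 x -> x = 0] &
    rank E1 = 1%N /\ rank E2 = 1%N].
Proof.
move=> FG rG; have G0 : forall x : M, x = 0 -> G x by move=> x ->; apply: face0.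
have [|E1 [E2 [[F1 S1 G1 [x1 [E1x1 x1_neq0]] r1] [F2 S2 G2 [x2 [E2x2 x2_neq0]] r2] E12]]] :=
  exists_two_covering_faces cancelM gen face_eq0 FG G0; first by rewrite rank_eq0.
exists E1, E2, x1, x2; rewrite rank_eq0 in r1 r2.
have := rank_lt_face cancelM gen face_eq0 S1 E1x1 x1_neq0.
have := rank_lt_face cancelM gen face_eq0 S2 E2x2 x2_neq0.
by rewrite rank_eq0; split => //; lia.
Qed.

Lemma exists_irreducible_below (G : M -> Prop) y : face G -> G y -> y <> 0 ->
  exists e, [/\ G e, e <> 0 & forall u v, e = u + v -> u = 0 \/ v = 0].
Proof.
move=> FG; elim/(well_founded_ind (strict_divisor_wf cancelM sharpM gen)): y.
move=> y IH Gy y_neq0.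
have [irr|/not_all_ex_not [u /not_all_ex_not [v /[dup] nuv]]] :=
  classic (forall u v, y = u + v -> u = 0 \/ v = 0); first by exists y.
move=> /not_imply_elim2 /not_or_and [u_neq0 v_neq0].
have yuv := not_imply_elim _ _ nuv.
apply: (IH u) => //; first by exists v.
by move: Gy; rewrite yuv => /(face_split FG) [].
Qed.

Lemma commensurable_of_relation (y e : M) A0 A1 B0 B1 : y <> 0 -> (A0 < B0)%N ->
  y *+ A0 + e *+ A1 = y *+ B0 + e *+ B1 ->
  exists c d, [/\ (0 < c)%N, (0 < d)%N & y *+ c = e *+ d].
Proof.
move=> y_neq0 lt_AB E.
have E1 : e *+ A1 = y *+ (B0 - A0) + e *+ B1.
  by apply: (cancelM (x := y *+ A0)); rewrite E addrA -mulrnDr (subnKC (ltnW lt_AB)).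
have [le_A1B1|lt_B1A1] := leqP A1 B1.
  exfalso; apply/y_neq0/(natmul_eq0 sharpM (c := (B0 - A0)%N)); first by rewrite subn_gt0.
  have : e *+ A1 + 0 = e *+ A1 + (y *+ (B0 - A0) + e *+ (B1 - A1)).
    by rewrite addr0 addrCA -mulrnDr (subnKC le_A1B1) E1 addrC.
  by move=> /cancelM /esym /(sharp_add_eq0 sharpM) [].
exists (B0 - A0)%N, (A1 - B1)%N; split; rewrite ?subn_gt0 //.
by apply: (integral_cancelr cancelM (x := e *+ B1)); rewrite -mulrnDr (subnK (ltnW lt_B1A1)).
Qed.

Lemma rank1_commensurable (G : M -> Prop) y e : (rank G <= 1)%N -> G y -> G e ->
  y <> 0 -> e <> 0 -> exists c d, [/\ (0 < c)%N, (0 < d)%N & y *+ c = e *+ d].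
Proof.
move=> rG Gy Ge y_neq0 e_neq0.
pose f2 (i : 'I_2) := if i == ord0 then y else e.
have /not_Qindep [a [b [n [i [n_gt0 E ab_neq]]]]] : ~ gp_Q_independent f2.
  have f2G i : G (f2 i) by rewrite /f2; case: (i == ord0).
  by move=> indep; move: (leq_trans (rank_ge cancelM gen f2G indep) rG).
move: E; rewrite !big_ord_recl !big_ord0 !addr0 /f2 /= !mulrnDl -!mulrnA => E.
have [lt_ab|lt_ba|eq_ab0] := ltngtP (a ord0 * n) (b ord0 * n).
- exact: commensurable_of_relation y_neq0 lt_ab E.
- exact: commensurable_of_relation y_neq0 lt_ba (esym E).
rewrite eq_ab0 in E; move/cancelM/(natmul_inj e_neq0): E => eq_ab1.
suff eq_ab j : a j = b j by case: (ab_neq (eq_ab i)).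
have [-> | ->] : j = ord0 \/ j = lift ord0 ord0.
  by case: j => [[|[|//]] lt_i2]; [left|right]; apply: val_inj.
- by move/eqP: eq_ab0; rewrite eqn_mul2r eqn0Ngt n_gt0 => /eqP.
- by move/eqP: eq_ab1; rewrite eqn_mul2r eqn0Ngt n_gt0 => /eqP.
Qed.

Hypothesis satM : saturated_monoid M.

(* Saturation turns commensurability [c y = d e] into divisibility. *)
Lemma rank1_irreducible_divides (G : M -> Prop) e y : (rank G <= 1)%N -> G e ->
  e <> 0 -> (forall u v, e = u + v -> u = 0 \/ v = 0) -> G y -> y <> 0 ->
  exists m, y = e + m.
Proof.
move=> rG Ge e_neq0 e_irr Gy y_neq0.
have [c [d [c_gt0 _ E]]] := rank1_commensurable rG Gy Ge y_neq0 e_neq0.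
have [le_cd|lt_dc] := leqP c d.
  by apply: (satM (c := e *+ (d - c)) c_gt0); rewrite E -mulrnDr subnKC.
have [m' Em'] : exists m', e = y + m'.
  by apply: (satM (c := e *+ (c - d)) c_gt0); rewrite E -mulrnDr subnKC // ltnW.
by exists 0; rewrite addr0 Em'; case: (e_irr _ _ Em') => // ->; rewrite addr0.
Qed.

End FaceLattice.

(** * The facet complementary to a height one prime *)

Section Facet.
Variable M : nmodType.
Hypothesis cancelM : integral_monoid M.
Hypothesis sharpM : sharp_monoid M.
Variables (N0 : nat) (g : 'I_N0 -> M).
Hypothesis gen : forall x : M, exists a : 'I_N0 -> nat, x = \sum_(i < N0) g i *+ a i.
Variable p : M -> Prop.
Hypothesis prime_p : prime_ideal p.
Hypothesis height_p : height p = 1%N.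

Local Notation F := (fun x : M => ~ p x).
Local Notation FI := (gen_ideal (face_plus (fun x : M => ~ p x))).

Lemma face_F : face F. Proof. exact: prime_compl_face. Qed.

Lemma p_ideal x y : p x -> p (x + y). Proof. by case: prime_p => + _; apply. Qed.

Lemma p_natmul x n : (0 < n)%N -> p x -> p (x *+ n).
Proof. by case: n => // n _ px; rewrite mulrS; apply: p_ideal. Qed.

Lemma rank_F : (0 < rk M)%N /\ rank F = (rk M).-1.
Proof.
have := le_rank cancelM gen (S := F) (T := fun _ => True) (fun _ _ => I).
by move: height_p; rewrite /height /rk; lia.
Qed.

Lemma exists_in_p : exists x, p x.
Proof.
apply: NNPP => p_empty.
have rF : rank F = rk M.
  by apply: (eq_rank cancelM gen) => x; split => // _ px; apply: p_empty; exists x.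
by move: height_p; rewrite /height rF subnn.
Qed.

Lemma FIP x : FI x <-> exists f m, [/\ F f, f <> 0 & x = f + m].
Proof.
split=> [[f [m [[Ff f_nunit] ->]]]|[f [m [Ff f_neq0 ->]]]].
  exists f, m; split => // f0; apply: f_nunit.
  by exists 0; rewrite f0 addr0; split => //; apply: (face0 face_F).
exists f, m; split => //; split => // [[y [_ fy0]]].
exact/f_neq0/(sharp_add_eq0 sharpM fy0).1.
Qed.

Lemma FI_F f m : F f -> f <> 0 -> FI (f + m).
Proof. by move=> Ff f_neq0; apply/FIP; exists f, m. Qed.

Lemma FI_ideal x y : FI x -> FI (x + y).
Proof. by move=> [f [m [Ff ->]]]; exists f, (m + y); rewrite addrA. Qed.

Lemma FI_compl_face : prime_ideal FI -> face (fun x => ~ FI x).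
Proof. exact: prime_compl_face. Qed.

Lemma FI_compl_F x : ~ FI x -> F x -> x = 0.
Proof. by move=> nFIx Fx; apply: NNPP => x_neq0; apply: nFIx; rewrite -[x]addr0; apply: FI_F. Qed.

Lemma height1_prime_above_p (q : M -> Prop) : prime_ideal q -> height q = 1%N ->
  (forall y, p y -> q y) -> same_set q p.
Proof.
move=> prime_q height_q pq y; split=> [qy|]; last exact: pq.
apply: NNPP => Fy.
have := rank_lt_face cancelM gen (prime_compl_face prime_q) (T := F) (y := y).
move=> /(_ (fun z nqz pz => nqz (pq _ pz)) Fy (fun nqy => nqy qy)).
have := le_rank cancelM gen (S := fun x => ~ q x) (T := fun _ => True) (fun _ _ => I).
by have [rk_gt0 ->] := rank_F; move: height_q; rewrite /height /rk; lia.
Qed.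

Lemma decomp_p x : p x -> exists f y, [/\ F f, ~ FI y, p y & x = f + y].
Proof.
elim/(well_founded_ind (strict_divisor_wf cancelM sharpM gen)): x => x IH px.
have [FIx|nFIx] := classic (FI x); last first.
  by exists 0, x; rewrite add0r; split => //; apply: (face0 face_F).
have [f [m [Ff f_neq0 xfm]]] := (FIP x).1 FIx.
have pm : p m by apply: NNPP => Fm; apply: (faceD face_F Ff Fm); rewrite -xfm.
have [|f' [y [Ff' nFIy py mfy]]] := IH m _ pm; first by exists f; rewrite xfm addrC.
by exists (f + f'), y; split => //; [apply: (faceD face_F) | rewrite xfm mfy addrA].
Qed.

(* An irreducible [e] of the rank-one face [M \ (F^+)] divides every element
   of that face lying in [p]; [decomp_p] then shows [p = e + M]. *)
Lemma principal_of_small_compl : saturated_monoid M -> prime_ideal FI ->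
  (rank (fun x => ~ FI x) <= 1)%N -> exists e, forall x, p x <-> exists m, x = e + m.
Proof.
move=> satM FI_prime rG; have FG := FI_compl_face FI_prime.
have p_neq0 y : p y -> y <> 0 by move=> py y0; apply: (face0 face_F); rewrite -y0.
have [x0 px0] := exists_in_p.
have [_ [y0 [_ nFIy0 py0 _]]] := decomp_p px0.
have [e [nFIe e_neq0 e_irr]] :=
  exists_irreducible_below cancelM sharpM gen FG nFIy0 (p_neq0 _ py0).
have pe : p e by apply: NNPP => Fe; apply/e_neq0/FI_compl_F.
exists e => x; split => [px|[m ->]]; last exact: p_ideal.
have [f [y [Ff nFIy py ->]]] := decomp_p px.
have [m ->] := rank1_irreducible_divides cancelM sharpM gen satM rG nFIe e_neq0 e_irr
  nFIy (p_neq0 _ py).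
by exists (f + m); rewrite addrCA.
Qed.

Section PrincipalGenerator.
Variable e : M.
Hypothesis p_gen : forall x, p x <-> exists m, x = e + m.

Lemma p_e : p e. Proof. by apply/p_gen; exists 0; rewrite addr0. Qed.

Lemma e_neq0 : e <> 0.
Proof. by move=> e0; apply: (face0 face_F); rewrite -e0; apply: p_e. Qed.

Lemma decomp_Fe x : exists f n, F f /\ x = f + e *+ n.
Proof.
elim/(well_founded_ind (strict_divisor_wf cancelM sharpM gen)): x => x IH.
have [px|Fx] := classic (p x); last by exists x, 0%N; rewrite mulr0n addr0.
have [m xem] := (p_gen x).1 px.
have [|f [n [Ff mfn]]] := IH m; first by exists e; split; [apply: e_neq0 | rewrite xem addrC].
by exists f, n.+1; split => //; rewrite xem mfn mulrS addrCA.
Qed.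

Lemma decomp_Fe_uniq f f' n n' : F f -> F f' -> f + e *+ n = f' + e *+ n' ->
  f = f' /\ n = n'.
Proof.
move=> Ff Ff' E.
wlog lt_nn' : f f' n n' Ff Ff' E / (n < n')%N => [hwlog|].
  case: (ltngtP n n') => [lt_nn'|lt_n'n|eq_nn']; first exact: hwlog.
    by have [-> ->] := hwlog _ _ _ _ Ff' Ff (esym E) lt_n'n.
  by rewrite eq_nn' in E *; split => //; apply: (integral_cancelr cancelM E).
exfalso; apply: Ff.
have : f + e *+ n = f' + e *+ (n' - n) + e *+ n.
  by rewrite E -addrA -mulrnDr (subnK (ltnW lt_nn')).
move=> /(integral_cancelr cancelM) ->; rewrite addrC.
by apply/p_ideal/p_natmul; [rewrite subn_gt0 | apply: p_e].
Qed.

Lemma nat_mults_F x : F x -> nat_mults e x -> x = 0.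
Proof.
move=> Fx [[|j] xej]; first by rewrite xej mulr0n.
by exfalso; apply: Fx; rewrite xej; apply: p_natmul p_e.
Qed.

Lemma nat_mults_decomp_Fe f n : F f -> nat_mults e (f + e *+ n) -> f = 0.
Proof.
by move=> Ff [k E]; have [] := decomp_Fe_uniq Ff (face0 face_F) (etrans E (esym (add0r _))).
Qed.

Lemma face_nat_mults : face (nat_mults e).
Proof.
split; first split; first by exists 0%N; rewrite mulr0n.
  by move=> x y [a ->] [b ->]; exists (a + b)%N; rewrite mulrnDr.
move=> x y xy_Ne.
have [f1 [a [Ff1 xfa]]] := decomp_Fe x; have [f2 [b [Ff2 yfb]]] := decomp_Fe y.
have /(nat_mults_decomp_Fe (faceD face_F Ff1 Ff2)) /(sharp_add_eq0 sharpM) [f10 f20] :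
  nat_mults e (f1 + f2 + e *+ (a + b)) by rewrite mulrnDr addrACA -xfa -yfb.
by split; [exists a; rewrite xfa f10 add0r | exists b; rewrite yfb f20 add0r].
Qed.

Lemma rank_nat_mults : rank (nat_mults e) = 1%N.
Proof.
apply/eqP; rewrite eqn_leq; apply/andP; split.
  apply: (rank_le_Qspan cancelM gen (h := fun _ : 'I_1 => e)) => x [n ->].
  exists 1%N, (fun _ => 0%N), (fun _ => n); split => //.
  by rewrite !big_ord1 mulr0n addr0 mulr1n.
rewrite -[1%N]/(0.+1)%N -{1}(rank_eq0 cancelM gen).
apply: (rank_lt_face cancelM gen (face_eq0 sharpM) (y := e)) => [x ->||]; last exact: e_neq0.
  by exists 0%N; rewrite mulr0n.
by exists 1%N.
Qed.

Lemma compl_FI_nat_mults x : ~ FI x <-> nat_mults e x.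
Proof.
split=> [nFIx|[n ->] /FIP [f [m [Ff f_neq0 E]]]].
  have [f [n [Ff xfn]]] := decomp_Fe x.
  have [f0|f_neq0] := classic (f = 0); first by exists n; rewrite xfn f0 add0r.
  by exfalso; apply: nFIx; rewrite xfn; apply: FI_F.
have [f' [k [Ff' mfk]]] := decomp_Fe m.
have : nat_mults e (f + f' + e *+ k) by exists n; rewrite -addrA -mfk -E.
by move=> /(nat_mults_decomp_Fe (faceD face_F Ff Ff')) /(sharp_add_eq0 sharpM) [].
Qed.

Lemma prime_FI : prime_ideal FI.
Proof.
split=> [x y|]; first exact: FI_ideal.
have [[Ne0 NeD] _] := face_nat_mults.
split=> [|x y /compl_FI_nat_mults Nx /compl_FI_nat_mults Ny]; first exact/compl_FI_nat_mults.
exact/compl_FI_nat_mults/NeD.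
Qed.

Lemma rank_compl_FI : rank (fun x => ~ FI x) = 1%N.
Proof.
by rewrite -rank_nat_mults; apply: (eq_rank cancelM gen) => x; apply: compl_FI_nat_mults.
Qed.

Lemma edge_nat_mults : edge (nat_mults e) /\ ~ subset_of (nat_mults e) F.
Proof.
split; first by split; [apply: face_nat_mults | apply: rank_nat_mults].
by move=> NeF; apply: (NeF e) => //; [exists 1%N | apply: p_e].
Qed.

(* An edge meeting [p] contains [e], hence [N e]; a nonzero [F]-component of
   one of its elements would make its rank exceed that of [N e]. *)
Lemma edge_outside_F E : edge E -> ~ subset_of E F -> same_set E (nat_mults e).
Proof.
move=> [FE rE] EF.
have [x [Ex px]] : exists x, E x /\ p x.
  by apply: NNPP => noEp; apply: EF => x Ex px; apply: noEp; exists x.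
have [f [[|n] [Ff xfn]]] := decomp_Fe x.
  by exfalso; apply: Ff; rewrite xfn mulr0n addr0 in px.
have Ee : E e.
  by move: Ex; rewrite xfn mulrS addrCA => /(face_split FE) [].
have NeE y : nat_mults e y -> E y by move=> [k ->]; apply: faceMn.
move=> y; split => [Ey|]; last exact: NeE.
have [f1 [k [Ff1 yfk]]] := decomp_Fe y.
have Ef1 : E f1 by move: Ey; rewrite yfk => /(face_split FE) [].
have [f10|f1_neq0] := classic (f1 = 0); first by exists k; rewrite yfk f10 add0r.
exfalso; suff : ~ nat_mults e f1.
  by move/(rank_lt_face cancelM gen face_nat_mults NeE Ef1); rewrite rank_nat_mults rE ltnn.
by move=> Nf1; apply/f1_neq0/(nat_mults_F Ff1 Nf1).
Qed.

Lemma FI_in_height1_prime x : FI x ->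
  exists q : M -> Prop, [/\ prime_ideal q, height q = 1%N, ~ same_set q p & q x].
Proof.
move=> /FIP [f [m [Ff f_neq0 ->]]].
have [T [FT NeT Tf rT]] : exists T, [/\ face T, (forall x, nat_mults e x -> T x), ~ T f &
    rank T = (rk M).-1].
  by apply: (exists_facet_avoiding cancelM gen face_nat_mults) => /(nat_mults_F Ff).
have [prime_T height_T] := facet_compl_prime cancelM gen FT rT (proj1 rank_F).
exists (fun x => ~ T x); split => //.
  by move=> /(_ e) [_ /(_ p_e)]; apply; apply: NeT; exists 1%N.
by move=> /(face_split FT) [].
Qed.

Lemma height1_prime_in_FI (q : M -> Prop) x : prime_ideal q -> height q = 1%N ->
  ~ same_set q p -> q x -> FI x.
Proof.
move=> prime_q height_q q_neq_p qx.
have [f [n [Ff xfn]]] := decomp_Fe x.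
have [f0|f_neq0] := classic (f = 0); last by rewrite xfn; apply: FI_F.
exfalso; apply/q_neq_p/height1_prime_above_p => // y /p_gen [m ->].
have [q_ideal _] := prime_q; apply: q_ideal; apply: NNPP => nqe.
by move: qx; rewrite xfn f0 add0r; exact: (faceMn (prime_compl_face prime_q) n nqe).
Qed.

Lemma principal_conditions : [/\ splits_off F,
   prime_ideal FI /\ (height FI >= rk M - 1)%N,
   prime_ideal FI /\ (forall E E' : M -> Prop, edge E -> ~ subset_of E F ->
                       edge E' -> ~ subset_of E' F -> same_set E E') &
   forall x, FI x <-> exists q : M -> Prop,
                        [/\ prime_ideal q, height q = 1%N, ~ same_set q p & q x]].
Proof.
split.
- exists (nat_mults e); split; first exact: face_nat_mults.
  split=> [x|f k f' k' Ff [n ->] Ff' [n' ->] E].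
    by have [f [n [Ff ->]]] := decomp_Fe x; exists f, (e *+ n); split => //; exists n.
  by have [-> ->] := decomp_Fe_uniq Ff Ff' E.
- by split; [apply: prime_FI | rewrite /height rank_compl_FI].
- split=> [|E E' edgeE EF edgeE' E'F x]; first exact: prime_FI.
  by rewrite (edge_outside_F edgeE EF) (edge_outside_F edgeE' E'F).
move=> x; split; first exact: FI_in_height1_prime.
by move=> [q [prime_q height_q q_neq_p qx]]; apply: (height1_prime_in_FI prime_q).
Qed.

End PrincipalGenerator.

Lemma small_compl_of_height : (height FI >= rk M - 1)%N ->
  (rank (fun x => ~ FI x) <= 1)%N.
Proof.
have := le_rank cancelM gen (S := fun x => ~ FI x) (T := fun _ => True) (fun _ _ => I).
by have [rk_gt0 _] := rank_F; rewrite /height /rk; lia.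
Qed.

Lemma small_compl_of_one_edge : prime_ideal FI ->
  (forall E E' : M -> Prop, edge E -> ~ subset_of E F ->
     edge E' -> ~ subset_of E' F -> same_set E E') ->
  (rank (fun x => ~ FI x) <= 1)%N.
Proof.
move=> FI_prime one_edge; rewrite leqNgt; apply/negP => rG.
have [E1 [E2 [x1 [x2 [[F1 F2] [G1 G2] [E1x1 E2x2 x1_neq0 x2_neq0 E12] [r1 r2]]]]]] :=
  two_edges_in_face cancelM sharpM gen (FI_compl_face FI_prime) rG.
have notinF E x : (forall y, E y -> ~ FI y) -> E x -> x <> 0 -> ~ subset_of E F.
  by move=> EG Ex x_neq0 EF; apply/x_neq0/FI_compl_F; [apply: EG | apply: EF].
have := one_edge E1 E2 (conj F1 r1) (notinF _ _ G1 E1x1 x1_neq0).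
move=> /(_ (conj F2 r2) (notinF _ _ G2 E2x2 x2_neq0) x1) [/(_ E1x1) E2x1 _].
exact/x1_neq0/E12.
Qed.

Section UnionOfHeight1Primes.
Hypothesis FI_union : forall x, FI x <->
  exists q : M -> Prop, [/\ prime_ideal q, height q = 1%N, ~ same_set q p & q x].

Lemma prime_FI_of_union : prime_ideal FI.
Proof.
split=> [x y|]; first exact: FI_ideal.
split=> [/FI_union [q [[_ [q0 _]] _ _ /q0]] //|x y nFIx nFIy /FI_union].
move=> [q [prime_q height_q q_neq_p qxy]].
have [qx|nqx] := classic (q x); first by apply: nFIx; apply/FI_union; exists q.
have [qy|nqy] := classic (q y); first by apply: nFIy; apply/FI_union; exists q.
by case: prime_q => _ [_ qcompl]; apply: (qcompl _ _ nqx nqy).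
Qed.

(* A second edge would lie outside some facet containing the first one, and
   the complement of that facet is a height one prime other than [p]. *)
Lemma small_compl_of_union : (rank (fun x => ~ FI x) <= 1)%N.
Proof.
rewrite leqNgt; apply/negP => rG.
have [E1 [E2 [x1 [x2 [[F1 F2] [G1 G2] [E1x1 E2x2 x1_neq0 x2_neq0 E12] _]]]]] :=
  two_edges_in_face cancelM sharpM gen (FI_compl_face prime_FI_of_union) rG.
have [T [FT E1T Tx2 rT]] : exists T, [/\ face T, (forall x, E1 x -> T x), ~ T x2 &
    rank T = (rk M).-1].
  by apply: (exists_facet_avoiding cancelM gen F1) => E1x2; apply/x2_neq0/E12.
have [prime_T height_T] := facet_compl_prime cancelM gen FT rT (proj1 rank_F).
apply: (G2 _ E2x2); apply/FI_union; exists (fun x => ~ T x); split => //.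
have px1 : p x1 by apply: NNPP => Fx1; apply/x1_neq0/FI_compl_F => //; apply: G1.
by move=> /(_ x1) [_ /(_ px1)]; apply; apply: E1T.
Qed.

End UnionOfHeight1Primes.

Section Splitting.
Variable K : M -> Prop.
Hypothesis FK : face K.
Hypothesis decompFK : forall x : M, exists f k, [/\ F f, K k & x = f + k].
Hypothesis decompFK_uniq : forall f k f' k', F f -> K k -> F f' -> K k' ->
  f + k = f' + k' -> f = f' /\ k = k'.

Lemma FK_zero x : F x -> K x -> x = 0.
Proof.
move=> Fx Kx; have x0 : x + 0 = 0 + x by rewrite addr0 add0r.
by have [] := decompFK_uniq Fx (face0 FK) (face0 face_F) Kx x0.
Qed.

Lemma compl_FI_splitting x : ~ FI x <-> K x.
Proof.
split=> [nFIx|Kx /FIP [f [m [Ff f_neq0 xfm]]]].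
  have [f [k [Ff Kk xfk]]] := decompFK x.
  have [f0|f_neq0] := classic (f = 0); first by rewrite xfk f0 add0r.
  by exfalso; apply: nFIx; rewrite xfk; apply: FI_F.
have [f' [k' [Ff' Kk' mfk]]] := decompFK m.
have : (f + f') + k' = 0 + x by rewrite add0r xfm mfk addrA.
move=> /(decompFK_uniq (faceD face_F Ff Ff') Kk' (face0 face_F) Kx) [ff'0 _].
exact/f_neq0/(sharp_add_eq0 sharpM ff'0).1.
Qed.

Lemma prime_FI_splitting : prime_ideal FI.
Proof.
split=> [x y|]; first exact: FI_ideal.
split=> [|x y /compl_FI_splitting Kx /compl_FI_splitting Ky].
  exact/compl_FI_splitting/(face0 FK).
exact/compl_FI_splitting/(faceD FK).
Qed.

Lemma face_F_add (E : M -> Prop) : face E -> (forall x, E x -> K x) ->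
  face (fun x => exists f k, [/\ F f, E k & x = f + k]).
Proof.
move=> FE EK; split; first split.
- by exists 0, 0; rewrite addr0; split => //; [apply: (face0 face_F) | apply: (face0 FE)].
- move=> x y [f [k [Ff Ek ->]]] [f' [k' [Ff' Ek' ->]]].
  exists (f + f'), (k + k'); rewrite addrACA.
  by split => //; [apply: (faceD face_F) | apply: (faceD FE)].
move=> x y [f [k [Ff Ek xyfk]]].
have [f1 [k1 [Ff1 Kk1 xfk1]]] := decompFK x; have [f2 [k2 [Ff2 Kk2 yfk2]]] := decompFK y.
have : (f1 + f2) + (k1 + k2) = f + k by rewrite -xyfk xfk1 yfk2 addrACA.
move=> /(decompFK_uniq (faceD face_F Ff1 Ff2) (faceD FK Kk1 Kk2) Ff (EK _ Ek)) [_ kk].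
rewrite -kk in Ek; have [Ek1 Ek2] := face_split FE Ek.
by split; [exists f1, k1 | exists f2, k2].
Qed.

(* With two edges [E1], [E2] in [K], the face [F + E1] would lie strictly
   between the facet [F] and [M]. *)
Lemma rank_splitting_le1 : (rank K <= 1)%N.
Proof.
rewrite leqNgt; apply/negP => rK.
have [E1 [E2 [x1 [x2 [[F1 F2] [K1 K2] [E1x1 E2x2 x1_neq0 x2_neq0 E12] _]]]]] :=
  two_edges_in_face cancelM sharpM gen FK rK.
have FPhi := face_F_add F1 K1.
set Phi := fun x => _ in FPhi.
have Phix1 : Phi x1 by exists 0, x1; rewrite add0r; split => //; apply: (face0 face_F).
have Phix2 : ~ Phi x2.
  move=> [f [k [Ff E1k x2fk]]].
  have : f + k = 0 + x2 by rewrite add0r x2fk.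
  move=> /(decompFK_uniq Ff (K1 _ E1k) (face0 face_F) (K2 _ E2x2)) [_ kx2].
  by apply/x2_neq0/E12; rewrite // -kx2.
have F_Phi x : F x -> Phi x.
  by move=> Fx; exists x, 0; rewrite addr0; split => //; apply: (face0 F1).
have Fx1 : ~ F x1 by move=> Fx1; apply/x1_neq0/FK_zero => //; apply: K1.
have := rank_lt_face cancelM gen face_F F_Phi Phix1 Fx1.
have := rank_lt_face cancelM gen FPhi (fun _ _ => I) I Phix2.
by have [_ ->] := rank_F; rewrite /rk; lia.
Qed.

End Splitting.

Lemma small_compl_of_splits_off : splits_off F ->
  prime_ideal FI /\ (rank (fun x => ~ FI x) <= 1)%N.
Proof.
move=> [K [FK [decompFK decompFK_uniq]]].
split; first exact: prime_FI_splitting FK decompFK decompFK_uniq.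
rewrite (eq_rank cancelM gen (T := K)); first exact: rank_splitting_le1 FK decompFK decompFK_uniq.
exact: compl_FI_splitting decompFK decompFK_uniq.
Qed.

End Facet.

Theorem lemma2p2 (M : nmodType) (p : M -> Prop) :
  toric_monoid M -> sharp_monoid M ->
  prime_ideal p -> height p = 1%N ->
  let F := fun x : M => ~ p x in
  let FI := gen_ideal (face_plus F) in
  [<-> (* (a) *) splits_off F;
       (* (b) *) prime_ideal FI /\ (height FI >= rk M - 1)%N;
       (* (c) *) prime_ideal FI /\
                 (forall E E' : M -> Prop, edge E -> ~ subset_of E F ->
                    edge E' -> ~ subset_of E' F -> same_set E E');
       (* (d) *) (forall x : M, FI x <->
                   exists q : M -> Prop, [/\ prime_ideal q, height q = 1%N,
                                           ~ same_set q p & q x]);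
       (* (e) *) exists e : M, forall x : M, p x <-> exists m : M, x = e + m]
  /\
  (forall e : M, (forall x : M, p x <-> exists m : M, x = e + m) ->
     [/\ (forall x : M, exists f n, F f /\ x = f + e *+ n),
         (forall (f f' : M) (n n' : nat), F f -> F f' ->
            f + e *+ n = f' + e *+ n' -> f = f' /\ n = n'),
         edge (nat_mults e) /\ ~ subset_of (nat_mults e) F
       & forall E : M -> Prop, edge E -> ~ subset_of E F ->
            same_set E (nat_mults e)]).
Proof.
move=> [[cancelM [N0 [g gen]]] satM _] sharpM prime_p height_p F FI.
have principal : prime_ideal FI -> (rank (fun x => ~ FI x) <= 1)%N ->
    exists e : M, forall x : M, p x <-> exists m : M, x = e + m.
  exact (principal_of_small_compl cancelM sharpM gen prime_p height_p satM).
have conditions e := principal_conditions cancelM sharpM gen prime_p height_p (e := e).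
split.
  tfae=> [/(small_compl_of_splits_off cancelM sharpM gen prime_p height_p) [FI_prime small]
         |[FI_prime /(small_compl_of_height cancelM gen height_p) small]
         |[FI_prime /(small_compl_of_one_edge cancelM sharpM gen prime_p FI_prime) small]
         |FI_union|[e /conditions []] //].
  - by have [e /conditions []] := principal FI_prime small.
  - by have [e /conditions []] := principal FI_prime small.
  - by have [e /conditions []] := principal FI_prime small.
  apply: principal; first exact (prime_FI_of_union FI_union).
  exact (small_compl_of_union cancelM sharpM gen prime_p height_p FI_union).
move=> e p_gen; split.
- exact (decomp_Fe cancelM sharpM gen prime_p p_gen).
- exact (decomp_Fe_uniq cancelM prime_p p_gen).
- exact (edge_nat_mults cancelM sharpM gen prime_p p_gen).
- exact (edge_outside_F cancelM sharpM gen prime_p p_gen).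
Qed.
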